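(* Let $K$ be a compact symmetric subset of $\mathbb{R}^m$ containing $0$, of Euclidean diameter at most $\varepsilon$, and let $\hat K$ be its convex hull. For $n\in\mathbb N$ let $K^n=\{k_1+\dots+k_n : k_i\in K\}$. Then for every $n\in\mathbb N$, the Gromov–Hausdorff distance between $K^n$ and its convex hull, both equipped with the Euclidean distance, is at most $(m+1)\varepsilon$. *)

From HB Require Import structures.
From mathcomp Require Import all_boot all_order all_algebra.
From mathcomp Require Import all_classical all_reals all_analysis.
Set Implicit Arguments. Unset Strict Implicit. Unset Printing Implicit Defensive.
Import Order.TTheory GRing.Theory Num.Theory.
Import numFieldNormedType.Exports.
Local Open Scope classical_set_scope.
Local Open Scope ring_scope.

Definition euclid_norm (R : realType) (m : nat) (x : 'rV[R]_m) : R :=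
  Num.sqrt (\sum_(i < m) (x ord0 i) ^+ 2).

Definition euclid_dist (R : realType) (m : nat) (x y : 'rV[R]_m) : R := euclid_norm (x - y).

Definition conv_hull (R : realType) (m : nat) (A : set 'rV[R]_m) : set 'rV[R]_m :=
  [set x | exists (N : nat) (w : 'I_N -> R) (p : 'I_N -> 'rV[R]_m),
     (forall i, A (p i)) /\ (forall i, 0 <= w i) /\ (\sum_(i < N) w i = 1) /\
     x = \sum_(i < N) w i *: p i].

Definition msum_pow (R : realType) (m : nat) (K : set 'rV[R]_m) (n : nat)
  : set 'rV[R]_m :=
  [set x | exists k : 'I_n -> 'rV[R]_m, (forall i, K (k i)) /\ x = \sum_(i < n) k i].

Definition is_metric (R : realType) (Z : Type) (d : Z -> Z -> R) : Prop :=
  (forall x y, 0 <= d x y) /\ (forall x y, d x y = 0 <-> x = y) /\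
  (forall x y, d x y = d y x) /\ (forall x y z, d x z <= d x y + d y z).

Definition isometric_on (R : realType) (m : nat) (Z : Type) (d : Z -> Z -> R)
  (A : set 'rV[R]_m) (f : 'rV[R]_m -> Z) : Prop :=
  forall x y, A x -> A y -> d (f x) (f y) = euclid_dist x y.

(* Gromov-Hausdorff distance between (A, Euclidean) and (B, Euclidean) is at
   most r: d_GH = inf over metric spaces Z and isometric embeddings f, g of the
   Hausdorff distance d_H(f A, g B).  "inf <= r" is expressed as: for every
   e > 0 there are Z, f, g with every point of f A within r + e of g B and
   every point of g B within r + e of f A (i.e. d_H(fA, gB) <= r + e). *)
Definition GH_dist_le (R : realType) (m : nat) (A B : set 'rV[R]_m) (r : R) : Prop :=
  forall e : R, 0 < e ->
  exists (Z : Type) (d : Z -> Z -> R) (f g : 'rV[R]_m -> Z),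
    is_metric d /\ isometric_on d A f /\ isometric_on d B g /\
    (forall a, A a -> exists b, B b /\ d (f a) (g b) <= r + e) /\
    (forall b, B b -> exists a, A a /\ d (f a) (g b) <= r + e).

From HB Require Import structures.
From mathcomp Require Import all_boot all_order all_algebra.
From mathcomp Require Import all_classical all_reals all_analysis.
From mathcomp Require Import ring.
Set Implicit Arguments. Unset Strict Implicit. Unset Printing Implicit Defensive.
Import Order.TTheory GRing.Theory Num.Theory.
Import numFieldNormedType.Exports.
Local Open Scope classical_set_scope.
Local Open Scope ring_scope.

(** A point of the convex hull of K^n is a nonnegative combination of points
    of K with total weight n.  By Carathéodory's theorem for such combinations
    (affine dependence of more than m + 1 points of R^m) at most m + 1 points
    are needed.  Rounding each coefficient down to an integer then yields a
    point of K^n (using 0 \in K to pad), and each rounding moves the point by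
    less than one element of K, i.e. by at most eps.  So K^n is (m + 1) eps-dense
    in its convex hull, which bounds the Gromov-Hausdorff distance via the
    identity embeddings into R^m. *)

Section EuclideanNorm.
Variables (R : realType) (m : nat).
Implicit Types (x y : 'rV[R]_m).

Lemma sum_sqr_ge0 x : 0 <= \sum_(i < m) (x ord0 i) ^+ 2.
Proof. by apply: sumr_ge0 => i _; exact: sqr_ge0. Qed.

Lemma cauchy_schwarz x y :
  (\sum_(i < m) x ord0 i * y ord0 i) ^+ 2 <=
  (\sum_(i < m) (x ord0 i) ^+ 2) * (\sum_(i < m) (y ord0 i) ^+ 2).
Proof.
set a := \sum_(i < m) _ ^+ 2; set b := \sum_(i < m) _ * _.
set c := \sum_(i < m) (y ord0 i) ^+ 2.
have quadratic_ge0 t : 0 <= a * t ^+ 2 + b * (t *+ 2) + c.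
  have -> : a * t ^+ 2 + b * (t *+ 2) + c =
            \sum_(i < m) (x ord0 i * t + y ord0 i) ^+ 2.
    rewrite (eq_bigr (fun i => x ord0 i ^+ 2 * t ^+ 2 +
      x ord0 i * y ord0 i * (t *+ 2) + y ord0 i ^+ 2)) => [|i _]; last by ring.
    by rewrite !big_split /= -!mulr_suml.
  by apply: sumr_ge0 => i _; exact: sqr_ge0.
have [a0|a_neq0] := eqVneq a 0.
  have x0 i : x ord0 i = 0.
    apply/eqP; rewrite -sqrf_eq0; apply/eqP.
    exact: (psumr_eq0P (fun j _ => sqr_ge0 (x ord0 j)) a0).
  have -> : b = 0 by rewrite /b big1 // => i _; rewrite x0 mul0r.
  by rewrite a0 expr0n /= mul0r.
have a_gt0 : 0 < a by rewrite lt_def a_neq0 sum_sqr_ge0.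
(* evaluate the nonnegative quadratic at its minimum t = - b / a *)
have := quadratic_ge0 (- b / a).
have -> : a * (- b / a) ^+ 2 + b * ((- b / a) *+ 2) + c = c - b ^+ 2 / a.
  by field.
by rewrite subr_ge0 ler_pdivrMr // mulrC.
Qed.

Lemma euclid_norm_ge0 x : 0 <= euclid_norm x.
Proof. exact: sqrtr_ge0. Qed.

Lemma euclid_normD x y : euclid_norm (x + y) <= euclid_norm x + euclid_norm y.
Proof.
rewrite /euclid_norm.
set A := Num.sqrt (\sum_(i < m) (x ord0 i) ^+ 2).
set B := Num.sqrt (\sum_(i < m) (y ord0 i) ^+ 2).
rewrite -(ger0_norm (addr_ge0 (sqrtr_ge0 _) (sqrtr_ge0 _))) -sqrtr_sqr.
rewrite ler_wsqrtr // sqrrD !sqr_sqrtr ?sum_sqr_ge0 //.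
have -> : \sum_(i < m) ((x + y) ord0 i) ^+ 2 =
   \sum_(i < m) (x ord0 i) ^+ 2 + (\sum_(i < m) x ord0 i * y ord0 i) *+ 2 +
   \sum_(i < m) (y ord0 i) ^+ 2.
  by rewrite -sumrMnl -!big_split /=; apply: eq_bigr => i _; rewrite !mxE; ring.
have dot_le : \sum_(i < m) x ord0 i * y ord0 i <= A * B.
  rewrite /A /B -sqrtrM ?sum_sqr_ge0 //; apply: le_trans (ler_norm _) _.
  by rewrite -sqrtr_sqr ler_wsqrtr //; exact: cauchy_schwarz.
by rewrite lerD2r lerD2l lerMn2r.
Qed.

Lemma euclid_normZ (a : R) x : euclid_norm (a *: x) = `|a| * euclid_norm x.
Proof.
rewrite /euclid_norm -sqrtr_sqr -sqrtrM ?sqr_ge0 // mulr_sumr.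
by congr Num.sqrt; apply: eq_bigr => i _; rewrite !mxE exprMn.
Qed.

Lemma euclid_norm0 : euclid_norm (0 : 'rV[R]_m) = 0.
Proof. by rewrite -(scale0r (0 : 'rV[R]_m)) euclid_normZ normr0 mul0r. Qed.

Lemma euclid_normN x : euclid_norm (- x) = euclid_norm x.
Proof. by rewrite -scaleN1r euclid_normZ normrN normr1 mul1r. Qed.

Lemma euclid_norm_eq0 x : euclid_norm x = 0 -> x = 0.
Proof.
move/eqP; rewrite sqrtr_eq0 => sum_le0.
have sum0 : \sum_(i < m) (x ord0 i) ^+ 2 = 0.
  by apply/eqP; rewrite eq_le sum_le0 sum_sqr_ge0.
apply/rowP => i; rewrite mxE; apply/eqP; rewrite -sqrf_eq0; apply/eqP.
exact: (psumr_eq0P (fun j _ => sqr_ge0 (x ord0 j)) sum0).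
Qed.

Lemma euclid_norm_sum M (v : 'I_M -> 'rV[R]_m) :
  euclid_norm (\sum_(j < M) v j) <= \sum_(j < M) euclid_norm (v j).
Proof.
elim: M v => [|M IH] v; first by rewrite !big_ord0 euclid_norm0.
by rewrite !big_ord_recr; apply: le_trans (euclid_normD _ _) _; rewrite lerD2r.
Qed.

Lemma euclid_dist_metric : is_metric (@euclid_dist R m).
Proof.
rewrite /euclid_dist; split; first by move=> x y; exact: euclid_norm_ge0.
split.
  move=> x y; split; last by move->; rewrite subrr euclid_norm0.
  by move/euclid_norm_eq0/eqP; rewrite subr_eq0 => /eqP.
split; first by move=> x y; rewrite -euclid_normN opprB.
by move=> x y z; rewrite -[x - z](subrKA y); exact: euclid_normD.
Qed.

End EuclideanNorm.

Lemma GH_dist_le_dense_subset (R : realType) (m : nat) (A B : set 'rV[R]_m)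
    (r : R) :
  0 <= r -> A `<=` B ->
  (forall b, B b -> exists a, A a /\ euclid_dist a b <= r) ->
  GH_dist_le A B r.
Proof.
move=> r_ge0 sAB denseA e e_gt0.
have [_ [dist0 _]] := @euclid_dist_metric R m.
exists 'rV[R]_m, (@euclid_dist R m), id, id.
split; first exact: euclid_dist_metric.
split; first by [].
split; first by [].
split=> [a Aa|b /denseA [a [Aa dab]]]; last first.
  by exists a; split=> //; apply: le_trans dab _; rewrite lerDl ltW.
exists a; split; first exact: sAB Aa.
by rewrite (proj2 (dist0 a a)) // addr_ge0 // ltW.
Qed.

Section CatFun.
Variables (T : Type) (n1 n2 : nat) (f1 : 'I_n1 -> T) (f2 : 'I_n2 -> T).

Definition cat_fun (i : 'I_(n1 + n2)) : T :=
  match fintype.split i with inl a => f1 a | inr b => f2 b end.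

Lemma cat_fun_lshift i : cat_fun (lshift n2 i) = f1 i.
Proof. by rewrite /cat_fun (unsplitK (inl i)). Qed.

Lemma cat_fun_rshift i : cat_fun (rshift n1 i) = f2 i.
Proof. by rewrite /cat_fun (unsplitK (inr i)). Qed.

Lemma forall_cat_fun (P : T -> Prop) :
  (forall i, P (f1 i)) -> (forall i, P (f2 i)) -> forall i, P (cat_fun i).
Proof. by move=> P1 P2 i; rewrite /cat_fun; case: (fintype.split i). Qed.

End CatFun.

Section MinkowskiPowers.
Variables (R : realType) (m : nat) (K : set 'rV[R]_m).
Hypothesis K0 : K 0.

Lemma msum_pow0 n : msum_pow K n 0.
Proof. by exists (fun _ => 0); split => //; rewrite big1. Qed.

Lemma msum_powD n1 n2 x y :
  msum_pow K n1 x -> msum_pow K n2 y -> msum_pow K (n1 + n2) (x + y).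
Proof.
move=> [k1 [Kk1 ->]] [k2 [Kk2 ->]]; exists (cat_fun k1 k2).
split; first exact: forall_cat_fun.
rewrite big_split_ord; congr (_ + _); apply: eq_bigr => i _.
  by rewrite cat_fun_lshift.
by rewrite cat_fun_rshift.
Qed.

Lemma msum_pow_mono n1 n2 x :
  (n1 <= n2)%N -> msum_pow K n1 x -> msum_pow K n2 x.
Proof.
move=> le12 Kx; rewrite -(subnKC le12) -[x]addr0.
exact: msum_powD Kx (msum_pow0 _).
Qed.

Lemma msum_pow_natr (q : 'rV[R]_m) a : K q -> msum_pow K a (a%:R *: q).
Proof.
move=> Kq; elim: a => [|a IH]; first by rewrite scale0r; exact: msum_pow0.
rewrite mulrSr scalerDl scale1r -addn1; apply: msum_powD => //.
by exists (fun _ => q); split => //; rewrite big_ord1.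
Qed.

Lemma msum_pow_sum M (a : 'I_M -> nat) (q : 'I_M -> 'rV[R]_m) :
  (forall j, K (q j)) ->
  msum_pow K (\sum_(j < M) a j) (\sum_(j < M) (a j)%:R *: q j).
Proof.
move=> Kq; elim: M a q Kq => [|M IH] a q Kq.
  by rewrite !big_ord0; exact: msum_pow0.
by rewrite !big_ord_recr; apply: msum_powD; [exact: IH | exact: msum_pow_natr].
Qed.

Lemma msum_pow_sub_conv_hull n : msum_pow K n `<=` conv_hull (msum_pow K n).
Proof.
move=> x Kx; exists 1%N, (fun _ => 1), (fun _ => x).
by split => //; split => //; rewrite !big_ord1 scale1r.
Qed.

End MinkowskiPowers.

Definition nonneg_comb (R : realType) (m : nat) (K : set 'rV[R]_m) (M : nat)
    (s : R) (x : 'rV[R]_m) : Prop :=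
  exists (c : 'I_M -> R) (q : 'I_M -> 'rV[R]_m),
    (forall j, K (q j)) /\ (forall j, 0 <= c j) /\ \sum_(j < M) c j = s /\
    x = \sum_(j < M) c j *: q j.

Section NonnegativeCombinations.
Variables (R : realType) (m : nat) (K : set 'rV[R]_m).

Lemma nonneg_comb0 : nonneg_comb K 0 0 0.
Proof.
exists (fun _ => 0), (fun _ => 0); split; first by case.
by split => //; rewrite !big_ord0.
Qed.

Lemma nonneg_combD M1 M2 s1 s2 x1 x2 :
  nonneg_comb K M1 s1 x1 -> nonneg_comb K M2 s2 x2 ->
  nonneg_comb K (M1 + M2) (s1 + s2) (x1 + x2).
Proof.
move=> [c1 [q1 [Kq1 [c1_ge0 [<- ->]]]]] [c2 [q2 [Kq2 [c2_ge0 [<- ->]]]]].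
exists (cat_fun c1 c2), (cat_fun q1 q2).
split; first exact: forall_cat_fun.
split; first exact: (forall_cat_fun (P := fun r => 0 <= r)).
by split; rewrite big_split_ord; congr (_ + _); apply: eq_bigr => i _;
  rewrite ?cat_fun_lshift ?cat_fun_rshift.
Qed.

Lemma nonneg_combZ n (w : R) p :
  msum_pow K n p -> 0 <= w -> nonneg_comb K n (w * n%:R) (w *: p).
Proof.
move=> [k [Kk ->]] w_ge0; exists (fun _ => w), k; split => //; split => //.
by rewrite sumr_const card_ord mulr_natr scaler_sumr.
Qed.

Lemma nonneg_comb_sum n N (w : 'I_N -> R) (p : 'I_N -> 'rV[R]_m) :
  (forall i, msum_pow K n (p i)) -> (forall i, 0 <= w i) ->
  exists M, nonneg_comb K M (\sum_(i < N) w i * n%:R) (\sum_(i < N) w i *: p i).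
Proof.
elim: N w p => [|N IH] w p Kp w_ge0.
  by exists 0%N; rewrite !big_ord0; exact: nonneg_comb0.
have [M combN] := IH (fun i => w (widen_ord (leqnSn N) i))
  (fun i => p (widen_ord (leqnSn N) i)) (fun i => Kp _) (fun i => w_ge0 _).
exists (M + n)%N; rewrite !big_ord_recr.
by apply: nonneg_combD combN _; exact: nonneg_combZ.
Qed.

Lemma conv_hull_msum_pow_nonneg_comb n x :
  conv_hull (msum_pow K n) x -> exists M, nonneg_comb K M n%:R x.
Proof.
move=> [N [w [p [Kp [w_ge0 [w_sum1 ->]]]]]].
have -> : n%:R = \sum_(i < N) w i * n%:R :> R by rewrite -mulr_suml w_sum1 mul1r.
exact: nonneg_comb_sum.
Qed.

End NonnegativeCombinations.

Lemma sum_eq0_exists_gt0 (R : realDomainType) M (mu : 'I_M -> R) :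
  \sum_(j < M) mu j = 0 -> (exists j, mu j != 0) -> exists j, 0 < mu j.
Proof.
move=> sum0 [j0 mu_j0_neq0]; apply/existsP; apply: contraT => /existsPn mu_le0.
have mu_N_ge0 j : 0 <= - mu j by rewrite oppr_ge0 leNgt mu_le0.
have : - mu j0 = 0.
  apply: (psumr_eq0P (P := xpredT) (fun j _ => mu_N_ge0 j)) => //.
  by rewrite sumrN sum0 oppr0.
by move/eqP; rewrite oppr_eq0 (negbTE mu_j0_neq0).
Qed.

Lemma affine_dependence (R : fieldType) (m M : nat) (q : 'I_M -> 'rV[R]_m) :
  (m.+1 < M)%N -> exists mu : 'I_M -> R,
    (exists j, mu j != 0) /\ \sum_(j < M) mu j = 0 /\ \sum_(j < M) mu j *: q j = 0.
Proof.
move=> ltmM.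
pose A : 'M[R]_(M, m + 1) := row_mx (\matrix_(j < M) q j) (const_mx 1).
have : ~~ row_free A.
  by rewrite -row_leq_rank -ltnNge (leq_ltn_trans (rank_leq_col A)) ?addn1.
rewrite -kermx_eq0 -nz_row_eq0; set u := nz_row (kermx A) => u_neq0.
have /sub_kermxP : (u <= kermx A)%MS := nz_row_sub _.
rewrite mul_mx_row => /eqP; rewrite row_mx_eq0 => /andP[/eqP uq0 /eqP u10].
exists (fun j => u 0 j); split; last split.
- apply/existsP; apply: contraR u_neq0 => /existsPn u_eq0.
  by apply/eqP/rowP => j; rewrite mxE; exact/eqP/negPn/u_eq0.
- have := congr1 (fun B : 'M[R]_1 => B 0 0) u10; rewrite !mxE => u1_00.
  by rewrite -[RHS]u1_00; apply: eq_bigr => j _; rewrite mxE mulr1.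
- by rewrite -[RHS]uq0 mulmx_sum_row; apply: eq_bigr => j _; rewrite rowK.
Qed.

Section Caratheodory.
Variables (R : realType) (m : nat) (K : set 'rV[R]_m).

Lemma nonneg_comb_drop_point M s x :
  (m.+1 < M.+1)%N -> nonneg_comb K M.+1 s x -> nonneg_comb K M s x.
Proof.
move=> ltmM [c [q [Kq [c_ge0 [<- ->]]]]].
have [mu [mu_neq0 [mu_sum0 mu_q0]]] := affine_dependence q ltmM.
have [j0 mu_j0_gt0] := sum_eq0_exists_gt0 mu_sum0 mu_neq0.
(* move along -mu as far as possible: the ratio c/mu is minimal at js *)
case: (arg_minP (fun j => c j / mu j) (mu_j0_gt0 : (fun j => 0 < mu j) j0))
  => js mu_js_gt0 min_js.
set t := c js / mu js.
pose c' j := c j - t * mu j.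
have c'_ge0 j : 0 <= c' j.
  rewrite subr_ge0; have [mu_j_gt0|mu_j_le0] := ltP 0 (mu j).
    by rewrite -ler_pdivlMr // min_js.
  by apply: le_trans (c_ge0 j); rewrite mulr_ge0_le0 // divr_ge0 // ltW.
have c'_js0 : c' js = 0 by rewrite /c' /t divfK ?subrr // gt_eqF.
have c'_sum : \sum_(j < M.+1) c' j = \sum_(j < M.+1) c j.
  by rewrite sumrB -mulr_sumr mu_sum0 mulr0 subr0.
have c'_comb : \sum_(j < M.+1) c' j *: q j = \sum_(j < M.+1) c j *: q j.
  under eq_bigr do rewrite scalerBl -scalerA.
  by rewrite sumrB -scaler_sumr mu_q0 scaler0 subr0.
exists (fun k => c' (lift js k)), (fun k => q (lift js k)).
split=> [k|]; first exact: Kq.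
split=> [k|]; first exact: c'_ge0.
by rewrite -c'_sum -c'_comb !(bigD1_ord js) //= c'_js0 add0r scale0r add0r.
Qed.

Lemma nonneg_comb_caratheodory M s x :
  nonneg_comb K M s x -> exists2 M', (M' <= m.+1)%N & nonneg_comb K M' s x.
Proof.
elim: M => [|M IH] comb; first by exists 0%N.
have [le|lt] := leqP M.+1 m.+1; first by exists M.+1.
exact/IH/(nonneg_comb_drop_point lt).
Qed.

End Caratheodory.

Section Rounding.
Variables (R : realType) (m : nat) (K : set 'rV[R]_m) (eps : R).
Hypotheses (K0 : K 0) (K_norm_le : forall q, K q -> euclid_norm q <= eps).

Lemma nonneg_comb_round M n x :
  nonneg_comb K M n%:R x ->
  exists y, msum_pow K n y /\ euclid_dist y x <= M%:R * eps.
Proof.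
move=> [c [q [Kq [c_ge0 [c_sum ->]]]]].
have eps_ge0 : 0 <= eps by rewrite -(euclid_norm0 R m) K_norm_le.
exists (\sum_(j < M) (Num.truncn (c j))%:R *: q j); split.
  apply: (msum_pow_mono K0 _ (msum_pow_sum K0 (fun j => Num.truncn (c j)) Kq)).
  by rewrite -(ler_nat R) natr_sum -c_sum ler_sum // => j _; rewrite truncn_le.
rewrite /euclid_dist -sumrB; apply: le_trans (euclid_norm_sum _) _.
rewrite mulr_natl -[in eps *+ M](card_ord M) -sumr_const ler_sum // => j _.
have /andP[trunc_le lt_trunc] := truncn_itv (c_ge0 j).
rewrite -scalerBl euclid_normZ distrC ger0_norm ?subr_ge0 //.
rewrite -[eps]mul1r ler_pM ?euclid_norm_ge0 ?subr_ge0 ?K_norm_le //.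
by rewrite lerBlDl natr1 ltW.
Qed.

End Rounding.

Theorem lemma2p2p5 (R : realType) (m : nat) (K : set 'rV[R]_m) (eps : R) :
  compact K ->
  (forall x, K x -> K (- x)) ->
  K 0 ->
  (forall x y, K x -> K y -> euclid_dist x y <= eps) ->
  forall n : nat,
    GH_dist_le (msum_pow K n) (conv_hull (msum_pow K n)) (m.+1%:R * eps).
Proof.
move=> _ _ K0 K_diam n.
have K_norm_le q : K q -> euclid_norm q <= eps.
  by move=> Kq; have := K_diam q 0 Kq K0; rewrite /euclid_dist subr0.
have eps_ge0 : 0 <= eps by rewrite -(euclid_norm0 R m) K_norm_le.
apply: GH_dist_le_dense_subset; first by rewrite mulr_ge0.
  exact: msum_pow_sub_conv_hull.
move=> x /conv_hull_msum_pow_nonneg_comb [M].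
move=> /nonneg_comb_caratheodory [M' M'_le comb].
have [y [Kny dyx]] := nonneg_comb_round K0 K_norm_le comb.
by exists y; split=> //; apply: le_trans dyx _; rewrite ler_wpM2r // ler_nat.
Qed.
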